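(* Suppose $|2|_D=1$. Then for every $\gamma\in D$, writing $\gamma=\gamma_++\gamma_-$ with $\gamma_\pm\in D^\pm$, we have $|\gamma|_D=\max\{|\gamma_+|_D,|\gamma_-|_D\}$.
   Context: $F$ is a non-archimedean local field, $D$ the quaternion division algebra over $F$, $|x|_D=|\mathrm{Nrd}(x)|_F$. $K\subset D$ is a quadratic extension of $F$ with conjugation $\overline{\cdot}$, and $\mu\in K\setminus F$. $D^+=K=\{\gamma:\gamma\mu=\mu\gamma\}$ and $D^-=\{\gamma\in D:\gamma\mu=\overline\mu\gamma\}$; $D=D^+\oplus D^-$. *)

From HB Require Import structures.
From mathcomp Require Import all_boot all_order all_algebra all_field.
From Stdlib Require Import ClassicalEpsilon.
Set Implicit Arguments. Unset Strict Implicit. Unset Printing Implicit Defensive.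
Import Order.TTheory GRing.Theory Num.Theory.
Local Open Scope ring_scope.

(* ---------- Non-archimedean local fields ---------------------------------
   F is a field with a normalized discrete valuation v : F^x -> Z (values of
   v at 0 are irrelevant), complete, with finite residue field of cardinality
   q.        *)

(* "x lies in the ideal p^k" *)
Definition in_pow (F : fieldType) (v : F -> int) (k : int) (x : F) : Prop :=
  x = 0 \/ (x != 0 /\ k <= v x).

Record nonarch_local_field (F : fieldType) (v : F -> int) (q : nat) : Prop := {
  val_mul : forall x y : F, x != 0 -> y != 0 -> v (x * y) = v x + v y;
  val_add : forall x y : F, x != 0 -> y != 0 -> x + y != 0 ->
              Num.min (v x) (v y) <= v (x + y);
  val_normalized : exists pi : F, pi != 0 /\ v pi = 1;
  val_complete : forall u : nat -> F,
      (forall k : int, exists N : nat, forall m n : nat, (N <= m)%N -> (N <= n)%N ->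
          in_pow v k (u m - u n)) ->
      exists l : F, forall k : int, exists N : nat, forall n : nat, (N <= n)%N ->
          in_pow v k (u n - l);
  (* residue field O/p is finite with exactly q elements:
     s is a list of representatives, pairwise incongruent, covering O *)
  residue_card : exists s : seq F,
      size s = q /\
      (forall r, r \in s -> in_pow v 0 r) /\
      (forall i j : nat, (i < q)%N -> (j < q)%N ->
          in_pow v 1 (nth 0 s i - nth 0 s j) -> i = j) /\
      (forall x : F, in_pow v 0 x -> exists2 r, r \in s & in_pow v 1 (x - r))
}.

Definition absF (F : fieldType) (v : F -> int) (q : nat) (x : F) : rat :=
  if x == 0 then 0 else (q%:Q) ^ (- v x).

Definition quaternion_division_algebra (F : fieldType) (D : falgType F) : Prop :=
  [/\ \dim {: D} = 4%N,
      (forall x : D, x != 0 -> x \is a GRing.unit) &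
      (forall x : D, (forall y : D, x * y = y * x) -> exists a : F, x = a%:A)].

(* Reduced characteristic polynomial X^2 - Trd(x) X + Nrd(x):
   for x = a in F it is (X - a)^2; for x not in F it is the (degree 2)
   minimal polynomial of x over F. *)
Definition rcp_coeffs (F : fieldType) (D : falgType F) (x : D) (tn : F * F) : Prop :=
  (exists a : F, x = a%:A /\ tn = (a *+ 2, a ^+ 2)) \/
  ((forall a : F, x != a%:A) /\ x * x - tn.1 *: x + tn.2%:A = 0).

Definition rcp (F : fieldType) (D : falgType F) (x : D) : F * F :=
  epsilon (inhabits (0, 0)) (rcp_coeffs x).

Definition Trd (F : fieldType) (D : falgType F) (x : D) : F := (rcp x).1.
Definition Nrd (F : fieldType) (D : falgType F) (x : D) : F := (rcp x).2.

Definition absD (F : fieldType) (v : F -> int) (q : nat) (D : falgType F) (x : D) : rat :=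
  absF v q (Nrd x).

(* Galois conjugation of the quadratic subfield K = F(mu) containing x:
   xbar = Trd(x) - x (the other root of the minimal polynomial of x). *)
Definition conjK (F : fieldType) (D : falgType F) (x : D) : D := (Trd x)%:A - x.

Definition Dplus (F : fieldType) (D : falgType F) (mu g : D) : Prop := g * mu = mu * g.
Definition Dminus (F : fieldType) (D : falgType F) (mu g : D) : Prop := g * mu = conjK mu * g.

From HB Require Import structures.
From mathcomp Require Import all_boot all_order all_algebra all_field.
From mathcomp Require Import zify ring.
From Stdlib Require Import ClassicalEpsilon.
Import Order.TTheory GRing.Theory Num.Theory.
Local Open Scope ring_scope.
Set Implicit Arguments. Unset Strict Implicit.

(* Write K = F(mu) with mu^2 = t0 mu - n0, and let N be the norm form of K/F.
   If gm = 0 there is nothing to prove.  Otherwise gm conjugates K (gm x =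
   conj(x) gm), and as 2 is invertible the commutator with mu shows that
   1, mu, gm, mu gm is a basis of D; hence D^+ = K, so gp = x in K, and gm^2 = s
   lies in F.  Then Nrd(x) = N(x), Nrd(gm) = -s and Nrd(x + gm) = N(x) - s, and
   N(x) is never s (x + gm would be a zero divisor), so N(x)/s is not a square
   in F.  Finally, since v(2) = 0, Hensel's lemma shows that principal units
   are squares, so the leading terms of N(x) and s cannot cancel:
   v(N(x) - s) = min(v N(x), v s), which is the claim. *)

Section Valuation.
Variables (F : fieldType) (v : F -> int) (q : nat).
Hypothesis HF : nonarch_local_field v q.

Lemma val1 : v 1 = 0.
Proof. by have := val_mul HF (oner_neq0 F) (oner_neq0 F); rewrite mulr1; move: (v 1); lia. Qed.

Lemma valN x : x != 0 -> v (- x) = v x.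
Proof.
move=> x0; have N10 : (-1 : F) != 0 by rewrite oppr_eq0 oner_neq0.
have := val_mul HF N10 N10; rewrite mulrNN mulr1 val1 => vN1.
by rewrite -mulN1r (val_mul HF N10 x0); move: vN1; move: (v _); lia.
Qed.

Lemma valV x : x != 0 -> v x^-1 = - v x.
Proof.
move=> x0; have := val_mul HF x0 (invr_neq0 x0).
by rewrite mulfV // val1; move: (v _) (v _); lia.
Qed.

Lemma valD_lt x y : x != 0 -> y != 0 -> v x < v y -> x + y != 0 /\ v (x + y) = v x.
Proof.
move=> x0 y0 lt_xy.
have xy0 : x + y != 0.
  by apply: contraTneq lt_xy => /eqP; rewrite addr_eq0 => /eqP->; rewrite (valN y0) ltxx.
split=> //; have ge1 := val_add HF x0 y0 xy0.
have ny0 : - y != 0 by rewrite oppr_eq0.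
have := val_add HF xy0 ny0; rewrite addrK (valN y0) => /(_ x0) ge2.
move: lt_xy ge1 ge2; move: (v x) (v y) (v (x + y)) => a b c.
by rewrite /Num.min; do 2!case: ifP; lia.
Qed.

Lemma in_pow_le k k' x : k' <= k -> in_pow v k x -> in_pow v k' x.
Proof. by move=> le [->|[x0 h]]; [left|right; split=> //; move: le h; move: (v x); lia]. Qed.

Lemma in_pow_val x : x != 0 -> in_pow v (v x) x.
Proof. by right. Qed.

Lemma in_powN k x : in_pow v k x -> in_pow v k (- x).
Proof. by case=> [->|[x0 h]]; [left; rewrite oppr0 | right; rewrite oppr_eq0 valN]. Qed.

Lemma in_powD k x y : in_pow v k x -> in_pow v k y -> in_pow v k (x + y).
Proof.
case=> [->|[x0 hx]]; first by rewrite add0r.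
case=> [->|[y0 hy]]; first by rewrite addr0; right.
have [->|xy0] := eqVneq (x + y) 0; [by left | right; split=> //].
move: hx hy (val_add HF x0 y0 xy0); move: (v x) (v y) (v (x + y)) => a b c.
by rewrite /Num.min; case: ifP; lia.
Qed.

Lemma in_powM k l x y : in_pow v k x -> in_pow v l y -> in_pow v (k + l) (x * y).
Proof.
case=> [->|[x0 hx]]; first by rewrite mul0r; left.
case=> [->|[y0 hy]]; first by rewrite mulr0; left.
right; rewrite mulf_neq0 // (val_mul HF x0 y0); split=> //.
by move: hx hy; move: (v x) (v y); lia.
Qed.

Lemma in_pow_eq0 x : (forall k, in_pow v k x) -> x = 0.
Proof.
move=> h; have [//|x0] := eqVneq x 0.
by case: (h (v x + 1)) => [//|[_]]; move: (v x); lia.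
Qed.

(* The residue field has at least the two classes of 0 and 1, so q^(-k) is
   strictly decreasing in k. *)
Lemma residue_card_ge2 : (2 <= q)%N.
Proof.
have [s [size_s [_ [_ cover]]]] := residue_card HF.
have unit1 : in_pow v 0 1 by right; rewrite oner_neq0 val1.
have [r0 r0s h0] := cover 0 (or_introl erefl).
have [r1 r1s h1] := cover 1 unit1.
case: s size_s r0s r1s {cover} => [|r [|r' s']] //= <-; last by [].
rewrite !inE => /eqP e0 /eqP e1; subst r0 r1.
have := in_powD h1 (in_powN h0); rewrite opprB addrA subrK subr0.
by case=> [/eqP|[_]]; [rewrite oner_eq0 | rewrite val1].
Qed.

Lemma absF_ge0 x : 0 <= absF v q x.
Proof. by rewrite /absF; case: ifP => // _; apply: exprz_ge0; rewrite ler0n. Qed.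

Lemma absF_max x y z : x != 0 -> y != 0 -> z != 0 ->
  v z = Num.min (v x) (v y) -> absF v q z = Num.max (absF v q x) (absF v q y).
Proof.
move=> x0 y0 z0 vz; rewrite /absF (negPf x0) (negPf y0) (negPf z0) vz.
have q_ge1 : 1 <= q%:Q by rewrite ler1n; have := residue_card_ge2; lia.
have [le_xy|lt_yx] := leP (v x) (v y).
  by rewrite max_l //; apply: ler_weXz2l => //; rewrite lerN2.
by rewrite max_r //; apply: ler_weXz2l => //; rewrite lerN2 ltW.
Qed.

Lemma absF_sqr_eq1 x : absF v q (x ^+ 2) = 1 -> x != 0 /\ v x = 0.
Proof.
rewrite /absF; case: ifP => [_ /eqP|/negbT]; first by rewrite eq_sym oner_eq0.
rewrite expf_eq0 /= => x0 abs1; split=> //.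
have q_gt1 : (1 < q)%N := residue_card_ge2.
have q0 : 0 < q%:Q by rewrite ltr0n; lia.
have q1 : q%:Q != 1 by rewrite pnatr_eq1; lia.
have := ieexprIz q0 q1 (etrans abs1 (esym (expr0z _))).
by rewrite expr2 (val_mul HF x0 x0); move: (v x); lia.
Qed.

(* From now on 2 is a unit of the valuation ring: the residue field has odd
   characteristic, which is what Hensel's lemma for square roots needs. *)
Hypotheses (two_neq0 : (2 : F) != 0) (val2 : v 2 = 0).

Lemma newton_step (u a : F) (n : nat) :
  a != 0 -> v a = 0 -> in_pow v n.+1 (a * a - u) ->
  let a' := (a + u / a) / 2 in
  [/\ a' != 0, v a' = 0, in_pow v n.+2 (a' * a' - u) & in_pow v n.+1 (a' - a)].
Proof.
move=> a0 va err a'; set e := a * a - u in err.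
have ta0 : 2 * a != 0 by rewrite mulf_neq0.
have tai0 : (2 * a)^-1 != 0 by rewrite invr_eq0.
have vtai : v (2 * a)^-1 = 0 by rewrite (valV ta0) (val_mul HF two_neq0 a0) val2 va.
have ea' : a' = (2 * a * a - e) * (2 * a)^-1 by rewrite /a' /e; field; rewrite two_neq0 a0.
have err' : a' * a' - u = e * e * ((2 * a)^-1 * (2 * a)^-1)
  by rewrite /a' /e; field; rewrite two_neq0 a0.
have step : a' - a = - e * (2 * a)^-1 by rewrite /a' /e; field; rewrite two_neq0 a0.
have taa0 : 2 * a * a != 0 by rewrite mulf_neq0.
have vtaa : v (2 * a * a) = 0 by rewrite (val_mul HF ta0 a0) (val_mul HF two_neq0 a0) val2 va.
have [num0 vnum] : 2 * a * a - e != 0 /\ v (2 * a * a - e) = 0.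
  have [->|e0] := eqVneq e 0; first by rewrite subr0.
  case: err => [/eqP|[_ ve]]; first by rewrite (negPf e0).
  have ne0 : - e != 0 by rewrite oppr_eq0.
  have [|-> ->] // := valD_lt taa0 ne0.
  by rewrite (valN e0) vtaa; move: ve; move: (v e); lia.
split.
- by rewrite ea' mulf_neq0.
- by rewrite ea' (val_mul HF num0 tai0) vnum vtai.
- rewrite err'; apply: in_pow_le (in_powM (in_powM err err)
    (in_powM (in_pow_val tai0) (in_pow_val tai0))).
  by rewrite vtai; lia.
- rewrite step; apply: in_pow_le (in_powM (in_powN err) (in_pow_val tai0)).
  by rewrite vtai; lia.
Qed.

Lemma newton_seq u : in_pow v 1 (u - 1) ->
  exists w : nat -> F, forall n, [/\ w n != 0, v (w n) = 0,
    in_pow v n.+1 (w n * w n - u) & in_pow v n.+1 (w n.+1 - w n)].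
Proof.
move=> u1; pose w n := iter n (fun a => (a + u / a) / 2) 1.
have inv n : [/\ w n != 0, v (w n) = 0 & in_pow v n.+1 (w n * w n - u)].
  elim: n => [|n [w0 vw err]].
    split; rewrite /= ?oner_neq0 ?val1 // mulr1 -opprB.
    by apply: in_pow_le (in_powN u1); lia.
  by have [] := newton_step w0 vw err.
exists w => n; have [w0 vw err] := inv n; split=> //.
by have [] := newton_step w0 vw err.
Qed.

Lemma cauchy_limit (w : nat -> F) : (forall n, in_pow v n.+1 (w n.+1 - w n)) ->
  exists l, forall k : int, exists N : nat, forall n, (N <= n)%N -> in_pow v k (w n - l).
Proof.
move=> incr.
have tail N n : (N <= n)%N -> in_pow v N (w n - w N).
  elim: n => [|n IH]; first by rewrite leqn0 => /eqP->; rewrite subrr; left.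
  rewrite leq_eqVlt => /orP[/eqP->|]; first by rewrite subrr; left.
  rewrite ltnS => le_Nn; rewrite -(subrKA (w n)).
  by apply: in_powD (in_pow_le _ (incr n)) (IH le_Nn); lia.
apply: (val_complete HF) => k; exists `|k|%N => m n hm hn.
have -> : w m - w n = (w m - w `|k|%N) - (w n - w `|k|%N) by rewrite opprB addrA subrK.
by apply: (@in_pow_le `|k|%N); [lia | apply: in_powD (tail _ _ hm) (in_powN (tail _ _ hn))].
Qed.

Lemma hensel_sqrt u : in_pow v 1 (u - 1) -> exists w, w * w = u.
Proof.
move=> /newton_seq [w hw].
have [l lim_l] := cauchy_limit (fun n => let: And4 _ _ _ h := hw n in h).
exists l; apply/eqP; rewrite -subr_eq0; apply/eqP/in_pow_eq0 => k.
have [N hN] := lim_l (`|k|%N + 1).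
have [w0 vw err _] := hw (N + `|k|)%N.
set a := w (N + `|k|)%N in w0 vw err *.
have close := hN _ (leq_addr `|k| N).
have -> : l * l - u = (a * a - u) - (a - l) * (2 * a - (a - l)) by ring.
apply: (@in_pow_le (`|k|%N + 1)); first lia.
apply: in_powD; first by apply: in_pow_le err; lia.
have unit2a : in_pow v 0 (2 * a).
  by have := in_pow_val (mulf_neq0 two_neq0 w0); rewrite (val_mul HF two_neq0 w0) val2 vw.
have small : in_pow v 0 (- (a - l)) by apply/in_powN/(in_pow_le _ close); lia.
by apply/in_powN/(in_pow_le _ (in_powM close (in_powD unit2a small))); lia.
Qed.

(* If x/y is not a square, the difference x - y has valuation min(v x, v y):
   cancellation of leading terms would make x/y a principal unit. *)
Lemma valB_nonsquare x y : x != 0 -> y != 0 -> (forall w, w * w != x / y) ->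
  x - y != 0 /\ v (x - y) = Num.min (v x) (v y).
Proof.
move=> x0 y0 nsq.
have ny0 : - y != 0 by rewrite oppr_eq0.
have xy0 : x - y != 0.
  by apply: contraNneq (nsq 1) => /subr0_eq->; rewrite mulr1 divff.
split=> //; rewrite -(valN y0) /Num.min.
case: (ltgtP (v x) (v (- y))) => [lt|gt|eq_v].
- by have [_ ->] := valD_lt x0 ny0 lt.
- by have [_] := valD_lt ny0 x0 gt; rewrite addrC.
have ge := val_add HF x0 ny0 xy0; rewrite /Num.min -eq_v ltxx in ge.
apply/eqP; rewrite -eq_v eq_le ge andbT.
rewrite leNgt; apply/negP => gt.
have [w /eqP] : exists w, w * w = x / y.
  apply: hensel_sqrt; right; have -> : x / y - 1 = (x - y) / y by field.
  rewrite mulf_neq0 ?invr_eq0 // (val_mul HF xy0) ?invr_eq0 // (valV y0) -(valN y0) -eq_v.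
  by split=> //; move: gt; move: (v x) (v (x - y)); lia.
by rewrite (negPf (nsq w)).
Qed.

End Valuation.

Section ReducedNorm.
Variables (F : fieldType) (D : falgType F).

Lemma scalar_inj (a b : F) : a%:A = b%:A :> D -> a = b.
Proof. by move/eqP; rewrite -subr_eq0 -scalerBl scaler_eq0 oner_eq0 orbF subr_eq0 => /eqP. Qed.

Lemma nonscalar_free (x : D) (k m : F) :
  (forall a, x != a%:A) -> k *: x + m%:A = 0 -> k = 0 /\ m = 0.
Proof.
move=> nsc kxm0; have [k0|k0] := eqVneq k 0.
  by move: kxm0; rewrite k0 scale0r add0r -(scale0r 1) => /scalar_inj.
have /eqP := nsc (- (k^-1 * m)); case.
have kx := canRL (addrK _) kxm0; rewrite sub0r in kx.
by rewrite -[x]scale1r -(mulVf k0) -scalerA kx scalerN scalerA scaleNr.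
Qed.

Lemma rcp_spec (x : D) (tn : F * F) : rcp_coeffs x tn -> rcp_coeffs x (rcp x).
Proof. by move=> h; apply: epsilon_spec; exists tn. Qed.

Lemma Nrd_scalar (a : F) : Nrd (a%:A : D) = a ^+ 2.
Proof.
have : rcp_coeffs (a%:A : D) (a *+ 2, a ^+ 2) by left; exists a.
rewrite /Nrd; case/rcp_spec => [[b [/scalar_inj <- ->]] // | [nsc _]].
by have /eqP := nsc a.
Qed.

Lemma rcp_factor (x x' : D) (t n : F) : (forall a, x != a%:A) ->
  x + x' = t%:A -> x * x' = n%:A -> rcp x = (t, n).
Proof.
move=> nsc sum prod.
have quad : x * x - t *: x + n%:A = 0.
  by rewrite -mulr_algr -sum -prod mulrDr opprD addrA subrr add0r addNr.
have [[a [xa _]]|[_]] := rcp_spec (tn := (t, n)) (or_intror (conj nsc quad)).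
  by have /eqP := nsc a.
case: (rcp x) => t' n' /= quad'.
have : (x * x - t *: x + n%:A) - (x * x - t' *: x + n'%:A) = 0.
  by rewrite quad quad' subrr.
rewrite opprD addrACA opprB [x * x - _ + _]addrC subrKA -!scalerBl.
by case/(nonscalar_free nsc) => /subr0_eq-> /subr0_eq->.
Qed.

Lemma qda_mul_neq0 (x y : D) : quaternion_division_algebra D ->
  x != 0 -> y != 0 -> x * y != 0.
Proof.
case=> _ unitD _ x0 y0; apply: contraNneq y0 => xy0.
by rewrite -(mulKr (unitD x x0) y) xy0 mulr0.
Qed.

Lemma qda_mul_eq0l (x y : D) : quaternion_division_algebra D ->
  y != 0 -> x * y = 0 -> x = 0.
Proof.
move=> HD y0 /eqP xy0; apply/eqP; apply: contraLR xy0 => x0.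
exact: qda_mul_neq0.
Qed.

Lemma qda_mul_eq0r (x y : D) : quaternion_division_algebra D ->
  x != 0 -> x * y = 0 -> y = 0.
Proof.
move=> HD x0 /eqP xy0; apply/eqP; apply: contraLR xy0 => y0.
exact: qda_mul_neq0.
Qed.

Lemma quadratic_generator (K : {vspace D}) (mu : D) :
  1 \in K -> (K * K <= K)%VS -> \dim K = 2%N -> mu \in K -> mu \notin 1%VS ->
  (forall a, mu != a%:A) /\ exists t0 n0 : F, mu * mu = t0 *: mu - n0%:A.
Proof.
move=> K1 KK dimK muK muF.
have mu_nsc a : mu != a%:A by apply: contraNneq muF => ->; rewrite memvZ // memv_line.
split=> //; pose X := [tuple 1; mu].
have freeX : free X.
  apply/freeP => k; rewrite !big_ord_recl big_ord0 addr0 /= addrC => k0.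
  have [k1_0 k0_0] := nonscalar_free mu_nsc k0.
  by case=> [[|[|i]] Hi] //; [rewrite -k0_0 | rewrite -k1_0]; congr k; apply: val_inj.
have XK : (<<X>> <= K)%VS by apply/span_subvP => y; rewrite !inE => /orP[]/eqP->.
have basisX : basis_of K X by rewrite basisEfree freeX XK dimK size_tuple.
have muK2 : mu * mu \in K by apply: (subvP KK); apply: memv_mul.
have := coord_basis basisX muK2; rewrite !big_ord_recl big_ord0 addr0 /= => ->.
exists (coord X (lift ord0 ord0) (mu * mu)), (- coord X ord0 (mu * mu)).
by rewrite scaleNr opprK addrC.
Qed.

End ReducedNorm.

Section QuadraticSubfield.
Variables (F : fieldType) (D : falgType F) (mu : D) (t0 n0 : F).
Hypothesis mu_sq : mu * mu = t0 *: mu - n0%:A.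
Hypothesis mu_nonscalar : forall a, mu != a%:A.

Definition kel (a b : F) : D := a%:A + b *: mu.

(* The Galois conjugate of a + b mu, using conj(mu) = t0 - mu. *)
Definition kconj (a b : F) : D := kel (a + b * t0) (- b).

Definition knorm (a b : F) : F := a ^+ 2 + a * b * t0 + b ^+ 2 * n0.

Lemma kel_scalar a : kel a 0 = a%:A.
Proof. by rewrite /kel scale0r addr0. Qed.

Lemma kel0 : kel 0 0 = 0.
Proof. by rewrite kel_scalar scale0r. Qed.

Lemma kel_mu : kel 0 1 = mu.
Proof. by rewrite /kel scale0r add0r scale1r. Qed.

Lemma kelD a b a' b' : kel a b + kel a' b' = kel (a + a') (b + b').
Proof. by rewrite /kel addrACA -!scalerDl. Qed.

Lemma kelZ k a b : k *: kel a b = kel (k * a) (k * b).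
Proof. by rewrite /kel scalerDr !scalerA. Qed.

Lemma kelM a b a' b' :
  kel a b * kel a' b' = kel (a * a' - b * b' * n0) (a * b' + b * a' + b * b' * t0).
Proof.
rewrite {1 2}/kel mulrDl !mulrDr -!scalerAl -!scalerAr !mul1r mulr1 mu_sq -scaleNr.
by rewrite -!kel_scalar -!kel_mu !(kelZ, kelD); congr kel; ring.
Qed.

Lemma kel_inj a b a' b' : kel a b = kel a' b' -> a = a' /\ b = b'.
Proof.
move=> /eqP; rewrite -subr_eq0 => /eqP.
rewrite -[- _]scaleN1r kelZ kelD /kel addrC.
by case/(nonscalar_free mu_nonscalar); rewrite !mulN1r => /subr0_eq-> /subr0_eq->.
Qed.

Lemma kel_mu_comm a b : kel a b * mu = mu * kel a b.
Proof. by rewrite -kel_mu !kelM; congr kel; ring. Qed.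

Lemma kel_nonscalar a b : b != 0 -> forall k, kel a b != k%:A.
Proof. by move=> b0 k; apply: contra_neq b0; rewrite -kel_scalar => /kel_inj[]. Qed.

Lemma kel_conj_mul a b : kel a b * kconj a b = (knorm a b)%:A.
Proof. by rewrite kelM -kel_scalar /knorm; congr kel; ring. Qed.

Lemma kel_conj_add a b : kel a b + kconj a b = (2 * a + b * t0)%:A.
Proof. by rewrite kelD -kel_scalar; congr kel; ring. Qed.

Lemma knorm0 : knorm 0 0 = 0.
Proof. by rewrite /knorm; ring. Qed.

Lemma knormZ k a b : knorm (k * a) (k * b) = k ^+ 2 * knorm a b.
Proof. by rewrite /knorm; ring. Qed.

Lemma Nrd_kel a b : Nrd (kel a b) = knorm a b.
Proof.
have [->|b0] := eqVneq b 0.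
  by rewrite kel_scalar Nrd_scalar /knorm; ring.
by rewrite /Nrd (rcp_factor (kel_nonscalar a b0) (kel_conj_add a b) (kel_conj_mul a b)).
Qed.

Lemma conjK_mu : conjK mu = kconj 0 1.
Proof.
have mu_add : mu + kconj 0 1 = t0%:A by rewrite -kel_mu kel_conj_add mulr0 add0r mul1r.
have mu_mul : mu * kconj 0 1 = (knorm 0 1)%:A by rewrite -kel_mu kel_conj_mul.
by rewrite /conjK /Trd (rcp_factor mu_nonscalar mu_add mu_mul) -mu_add [_ - mu]addrC addKr.
Qed.

Section Conjugator.
Variable gm : D.
Hypothesis gm_conj : gm * mu = kconj 0 1 * gm.
Hypothesis gm_neq0 : gm != 0.
Hypothesis two_neq0 : (2 : F) != 0.
Hypothesis HD : quaternion_division_algebra D.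

Lemma gm_kel a b : gm * kel a b = kconj a b * gm.
Proof.
rewrite {1}/kel mulrDr -!scalerAr gm_conj mulr1 -[gm in a *: gm]mul1r !scalerAl -mulrDl.
by rewrite -kel_scalar kelZ kelD /kconj; congr (kel _ _ * _); ring.
Qed.

Lemma gm_kconj a b : gm * kconj a b = kel a b * gm.
Proof. by rewrite {1}/kconj gm_kel /kconj; congr (kel _ _ * _); ring. Qed.

(* The commutator with mu of x = X + Y gm (X, Y in K) only sees the D^- part:
   [mu, x] = Y (mu - conj mu) gm, and mu - conj mu = 2 mu - t0. *)
Lemma mu_commutator a b c d :
  mu * (kel a b + kel c d * gm) - (kel a b + kel c d * gm) * mu
  = kel c d * (kel (- t0) 2 * gm).
Proof.
have delta : kel (- t0) 2 = mu - kconj 0 1.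
  by rewrite -kel_mu -[- kconj _ _]scaleN1r kelZ kelD; congr kel; ring.
rewrite delta [mu * (kel a b + _)]mulrDr [(kel a b + _) * mu]mulrDl.
rewrite -kel_mu_comm mulrA -kel_mu_comm -[kel c d * gm * mu]mulrA gm_conj.
by rewrite opprD addrACA subrr add0r !mulrA -mulrBl -mulrBr.
Qed.

Lemma delta_gm_neq0 : kel (- t0) 2 * gm != 0.
Proof.
apply: qda_mul_neq0 => //; rewrite -kel0; apply/negP => /eqP/kel_inj[_ two0].
by move: two_neq0; rewrite two0 eqxx.
Qed.

Lemma kel_gm_indep a b c d : kel a b + kel c d * gm = 0 ->
  [/\ a = 0, b = 0, c = 0 & d = 0].
Proof.
move=> x0; have := mu_commutator a b c d; rewrite x0 mulr0 mul0r subrr => /esym comm0.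
have [c0 d0] : c = 0 /\ d = 0.
  by apply: kel_inj; rewrite kel0; apply: qda_mul_eq0l HD delta_gm_neq0 _.
by move: x0; rewrite c0 d0 kel0 mul0r addr0 -kel0 => /kel_inj[-> ->].
Qed.

Lemma quaternion_basis x : exists a b c d, x = kel a b + kel c d * gm.
Proof.
case: HD => dim4 _ _; pose X := [tuple 1; mu; gm; mu * gm].
have sumX a b c d : a *: 1 + (b *: mu + (c *: gm + d *: (mu * gm)))
                    = kel a b + kel c d * gm.
  by rewrite /kel mulrDl -!scalerAl mul1r !addrA.
have freeX : free X.
  apply/freeP => k; rewrite !big_ord_recl big_ord0 addr0 /= sumX.
  case/kel_gm_indep => k0 k1 k2 k3 [[|[|[|[|i]]]] Hi] //.
  - by rewrite -k0; congr k; apply: val_inj.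
  - by rewrite -k1; congr k; apply: val_inj.
  - by rewrite -k2; congr k; apply: val_inj.
  - by rewrite -k3; congr k; apply: val_inj.
have basisX : basis_of fullv X by rewrite basisEfree freeX subvf dim4 size_tuple.
have := coord_basis basisX (memvf x); rewrite !big_ord_recl big_ord0 addr0 /= sumX.
by move=> ->; do 4!eexists.
Qed.

Lemma centralizer_mu x : x * mu = mu * x -> exists a b, x = kel a b.
Proof.
have [a [b [c [d ->]]]] := quaternion_basis x => comm.
have := mu_commutator a b c d; rewrite comm subrr => /esym comm0.
have [c0 d0] : c = 0 /\ d = 0.
  by apply: kel_inj; rewrite kel0; apply: qda_mul_eq0l HD delta_gm_neq0 _.
by exists a, b; rewrite c0 d0 kel0 mul0r addr0.
Qed.

(* gm^2 commutes with both mu and gm, hence lies in F. *)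
Lemma gm_sq : exists s : F, gm * gm = s%:A.
Proof.
have gm2_mu : gm * gm * mu = mu * (gm * gm).
  by rewrite -mulrA gm_conj mulrA gm_kconj kel_mu mulrA.
have [a [b gm2]] := centralizer_mu gm2_mu.
have : kconj a b - kel a b = 0.
  by apply: qda_mul_eq0l HD gm_neq0 _; rewrite mulrBl -gm_kel -gm2 mulrA subrr.
rewrite /kconj -[- kel a b]scaleN1r kelZ kelD -kel0 => /kel_inj[_ /eqP].
rewrite mulN1r -opprD oppr_eq0 -mulr2n -mulr_natl mulf_eq0 (negPf two_neq0) /= => /eqP b0.
by exists a; rewrite gm2 b0 kel_scalar.
Qed.

Lemma kel_add_gm_not_comm a b : (kel a b + gm) * mu != mu * (kel a b + gm).
Proof.
apply/eqP => comm; have := mu_commutator a b 1 0.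
rewrite kel_scalar scale1r !mul1r comm subrr => /esym/eqP.
by rewrite (negPf delta_gm_neq0).
Qed.

Lemma kel_add_gm_nonscalar a b k : kel a b + gm != k%:A.
Proof.
by apply: contraNneq (kel_add_gm_not_comm a b) => ->; rewrite -kel_scalar kel_mu_comm.
Qed.

Section GmSquare.
Variable s : F.
Hypothesis gm_sqE : gm * gm = s%:A.

Lemma kel_add_gm_mul_conj a b :
  (kel a b + gm) * (kconj a b - gm) = (knorm a b - s)%:A.
Proof. by rewrite mulrDl !mulrBr kel_conj_mul gm_kconj gm_sqE subrKA scalerBl. Qed.

Lemma Nrd_kel_add_gm a b : Nrd (kel a b + gm) = knorm a b - s.
Proof.
have sum : (kel a b + gm) + (kconj a b - gm) = (2 * a + b * t0)%:A.
  by rewrite addrACA subrr addr0 kel_conj_add.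
by rewrite /Nrd (rcp_factor (kel_add_gm_nonscalar a b) sum (kel_add_gm_mul_conj a b)).
Qed.

Lemma Nrd_gm : Nrd gm = - s.
Proof. by have := Nrd_kel_add_gm 0 0; rewrite kel0 add0r knorm0 sub0r. Qed.

(* D being a division algebra, s is not a norm from K: otherwise x + gm would
   be a zero divisor. *)
Lemma knorm_neq_gm_sq a b : knorm a b != s.
Proof.
apply/eqP => Ns; have := kel_add_gm_mul_conj a b; rewrite Ns subrr scale0r.
have y0 : kel a b + gm != 0 by have := kel_add_gm_nonscalar a b 0; rewrite scale0r.
move/(qda_mul_eq0r HD y0)/subr0_eq => gmE.
by have := kel_add_gm_not_comm 0 0; rewrite kel0 add0r -gmE kel_mu_comm eqxx.
Qed.

Lemma gm_sq_neq0 : s != 0.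
Proof. by have := knorm_neq_gm_sq 0 0; rewrite knorm0 eq_sym. Qed.

Lemma knorm_ratio_nonsquare a b : knorm a b != 0 -> forall w, w * w != knorm a b / s.
Proof.
move=> N0 w; apply/eqP => ww.
have w0 : w != 0.
  by apply: contraNneq (mulf_neq0 N0 (invr_neq0 gm_sq_neq0)) => w0; rewrite -ww w0 mul0r.
have Nw : knorm a b = w * w * s by rewrite ww (divfK gm_sq_neq0).
have := knorm_neq_gm_sq (w^-1 * a) (w^-1 * b); rewrite knormZ Nw.
have -> : w^-1 ^+ 2 * (w * w * s) = s by field.
by rewrite eqxx.
Qed.

End GmSquare.

End Conjugator.

End QuadraticSubfield.

Unset Implicit Arguments. Set Strict Implicit.

Theorem mainTheorem7 (F : fieldType) (v : F -> int) (q : nat)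
  (HF : nonarch_local_field v q)
  (D : falgType F) (HD : quaternion_division_algebra D)
  (K : {vspace D}) (HK1 : 1 \in K) (HKmul : (K * K <= K)%VS) (HKdim : \dim K = 2%N)
  (mu : D) (HmuK : mu \in K) (HmuF : mu \notin 1%VS)
  (H2 : absD v q (2 : D) = 1) :
  forall g gp gm : D, Dplus mu gp -> Dminus mu gm -> g = gp + gm ->
    absD v q g = Num.max (absD v q gp) (absD v q gm).
Proof.
have [mu_nsc [t0 [n0 mu_sq]]] := quadratic_generator HK1 HKmul HKdim HmuK HmuF.
have [two0 val2] : (2 : F) != 0 /\ v 2 = 0.
  by apply: (absF_sqr_eq1 HF); rewrite -(Nrd_scalar D) scaler_nat.
move=> g gp gm; rewrite /Dplus /Dminus (conjK_mu mu_sq mu_nsc) => gp_comm gm_conj ->.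
have [-> | gm0] := eqVneq gm 0.
  rewrite addr0 /absD -(scale0r (1 : D)) Nrd_scalar expr0n /= {3}/absF eqxx.
  by rewrite max_l // absF_ge0.
have [a [b ->]] := centralizer_mu mu_sq mu_nsc gm_conj gm0 two0 HD gp_comm.
have [s gm_sqE] := gm_sq mu_sq mu_nsc gm_conj gm0 two0 HD.
rewrite /absD (Nrd_kel mu_sq mu_nsc) (Nrd_kel_add_gm mu_sq mu_nsc gm_conj gm0 two0 HD gm_sqE).
rewrite (Nrd_gm mu_sq mu_nsc gm_conj gm0 two0 HD gm_sqE).
have [N0 | N0] := eqVneq (knorm t0 n0 a b) 0.
  by rewrite N0 sub0r {2}/absF eqxx max_r // absF_ge0.
have s0 := gm_sq_neq0 mu_sq mu_nsc gm_conj gm0 two0 HD gm_sqE.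
have [Ns0 vNs] := valB_nonsquare HF two0 val2 N0 s0
  (knorm_ratio_nonsquare mu_sq mu_nsc gm_conj gm0 two0 HD gm_sqE N0).
by apply: (absF_max HF) => //; rewrite ?oppr_eq0 // (valN HF s0).
Qed.
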